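(* Let $n>1$, $\lambda\in(0,1)$, and let $X_1,\ldots,X_n$ be a time-homogeneous Markov chain on $\{0,1\}$ with transition matrix $K=\begin{pmatrix}1-\lambda&\lambda\\ \lambda&1-\lambda\end{pmatrix}$ and $X_1\sim\pi=(1/2,1/2)$. Let $f$ satisfy $|f(x_1,\ldots,x_i,\ldots,x_n)-f(x_1,\ldots,\hat x,\ldots,x_n)|\le 1/n$ for all $x^n,\hat x$ and $1\le i\le n$. Then for every $\alpha>1$ (with $\beta=\alpha/(\alpha-1)$) and $t>0$, $$\mathbb{P}\left(\left|f-\mathcal{P}_{\bigotimes_{i=1}^n X_i}(f)\right|\ge t\right)\le 2^{1/\beta}\exp\left(-\frac{2nt^2}{\beta}+\frac{n-1}{\beta}\ln\left(2\left((1-\lambda)^\alpha+\lambda^\alpha\right)^{\frac{1}{\alpha-1}}\right)\right).$$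
   Context: $\mathcal{P}_{\bigotimes_{i=1}^n X_i}$ is the product of the marginal laws of $X_1,\ldots,X_n$ (here $\pi^{\otimes n}$), and $\mu(g)=\int g\,d\mu$. *)

From HB Require Import structures.
From mathcomp Require Import all_boot all_order all_algebra.
From mathcomp Require Import all_classical all_reals all_analysis.
Set Implicit Arguments. Unset Strict Implicit. Unset Printing Implicit Defensive.
Import Order.TTheory GRing.Theory Num.Theory.
Local Open Scope ring_scope.

(* Discrete setting: sample space {0,1}^n, encoded as {ffun 'I_n -> bool}
   (false = 0, true = 1). Index i : 'I_n corresponds to X_{i+1}. *)

Section Defs.
Variable R : realType.

Definition Kmat (lam : R) (a b : bool) : R := if a == b then 1 - lam else lam.

Definition pi0 (a : bool) : R := 1 / 2.

Definition markov_law (n : nat) (lam : R) (x : {ffun 'I_n -> bool}) : R :=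
  match n as m return {ffun 'I_m -> bool} -> R with
  | 0 => fun _ => 1
  | m.+1 => fun y => pi0 (y ord0) *
      \prod_(i < m) Kmat lam (y (widen_ord (leqnSn m) i)) (y (lift ord0 i))
  end x.

Definition prod_law (n : nat) (x : {ffun 'I_n -> bool}) : R :=
  \prod_(i < n) pi0 (x i).

Definition expect (n : nat) (mu : {ffun 'I_n -> bool} -> R)
  (g : {ffun 'I_n -> bool} -> R) : R := \sum_x mu x * g x.

Definition prob (n : nat) (mu : {ffun 'I_n -> bool} -> R)
  (A : pred {ffun 'I_n -> bool}) : R := \sum_(x | A x) mu x.

Definition upd (n : nat) (x : {ffun 'I_n -> bool}) (i : 'I_n) (b : bool)
  : {ffun 'I_n -> bool} := [ffun j => if j == i then b else x j].

End Defs.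

From HB Require Import structures.
From mathcomp Require Import all_boot all_order all_algebra.
From mathcomp Require Import all_classical all_reals all_analysis.
From mathcomp Require Import ring lra zify.
Import Order.TTheory GRing.Theory Num.Theory numFieldNormedType.Exports.
Set Implicit Arguments. Unset Strict Implicit. Unset Printing Implicit Defensive.
Local Open Scope ring_scope.

(* Under the product law pi^(x)n, the uniform law on {0,1}^n, f satisfies McDiarmid's
   inequality P(|f - E f| >= t) <= 2 exp(-2 n t^2): revealing one coordinate at a
   time, the moment generating function of f - E f picks up a factor
   cosh a <= exp(a^2/2) per coordinate.  The law of the chain has density
   r = 2^n P(X = x) with respect to pi^(x)n, so Hoelder's inequality gives
   P(X in A) = E[r 1_A] <= E[r^alpha]^(1/alpha) P(A)^(1/beta).  Every row of K^alpha
   sums to S = (1-lam)^alpha + lam^alpha, so summing out the chain one coordinate at a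
   time gives E[r^alpha] = (2^(alpha-1) S)^(n-1).  Finally
   (2^(alpha-1) S)^(1/alpha) = (2 S^(1/(alpha-1)))^(1/beta), and ln (2 S^(1/(alpha-1)))
   is the Renyi divergence of order alpha of a row of K from pi. *)

Lemma expn2_fact_leq_fact_double j : (2 ^ j * j`! <= (j.*2)`!)%N.
Proof.
elim: j => [//|j IH]; rewrite doubleS !factS expnS.
have -> : (2 * 2 ^ j * (j.+1 * j`!) = 2 * j.+1 * (2 ^ j * j`!))%N by ring.
by move: IH (fact_gt0 j.*2); rewrite -mul2n; nia.
Qed.

Section CoshBound.
Variable R : realType.

Lemma exp_coeff_addN_odd (a : R) k : odd k -> exp_coeff a k + exp_coeff (- a) k = 0.
Proof.
by move=> ok; rewrite /exp_coeff /= exprNn -signr_odd ok expr1 mulN1r mulNr subrr.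
Qed.

Lemma exp_coeff_addN_double (a : R) j :
  exp_coeff a j.*2 + exp_coeff (- a) j.*2 <= 2 * exp_coeff (a ^+ 2 / 2) j.
Proof.
rewrite /exp_coeff /= exprNn -signr_odd odd_double expr0 mul1r.
rewrite -mul2n exprM -mulr2n -(mulr_natl (_ / _) 2) ler_pM2l // expr_div_n -mulrA.
apply: ler_wpM2l; first by rewrite exprn_ge0 ?sqr_ge0.
rewrite -invfM lef_pV2 ?posrE ?mulr_gt0 ?exprn_gt0 ?ltr0n ?fact_gt0 //.
by rewrite -natrX -natrM ler_nat mul2n expn2_fact_leq_fact_double.
Qed.

Lemma exp_coeff_addN_ge0 (a : R) k : 0 <= exp_coeff a k + exp_coeff (- a) k.
Proof.
have [ok|ek] := boolP (odd k); first by rewrite exp_coeff_addN_odd.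
rewrite /exp_coeff /= exprNn -signr_odd (negbTE ek) expr0 mul1r -mulrDl.
by rewrite divr_ge0 // -mulr2n mulrn_wge0 // -(odd_double_half k) (negbTE ek) add0n
  -mul2n exprM exprn_ge0 // sqr_ge0.
Qed.

Lemma series_exp_coeff_addN_double (a : R) N :
  series (exp_coeff a + exp_coeff (- a)) N.*2 <= 2 * series (exp_coeff (a ^+ 2 / 2)) N.
Proof.
have seriesS (u : R^nat) k : series u k.+1 = series u k + u k.
  by rewrite /series /= big_nat_recr.
elim: N => [|N IH]; first by rewrite /series /= !big_geq // mulr0.
rewrite doubleS !seriesS -addrA mulrDr; apply: lerD IH _.
rewrite !addrfctE (@exp_coeff_addN_odd a N.*2.+1) ?addr0 ?exp_coeff_addN_double //=.
by rewrite odd_double.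
Qed.

Lemma expR_add_expRN_le (a : R) : expR a + expR (- a) <= 2 * expR (a ^+ 2 / 2).
Proof.
have cvg_exp := @is_cvg_series_exp_coeff R.
have -> : expR a + expR (- a) = limn (series (exp_coeff a + exp_coeff (- a))).
  by rewrite lim_seriesD.
apply: limr_le; first exact: is_cvg_seriesD.
near=> N; apply: (@le_trans _ _ (series (exp_coeff a + exp_coeff (- a)) N.*2)).
  apply: nondecreasing_series; last by rewrite -addnn leq_addr.
  by move=> k _ _; rewrite addrfctE exp_coeff_addN_ge0.
apply: (le_trans (series_exp_coeff_addN_double a N)); rewrite ler_wpM2l //.
apply: (nondecreasing_cvgn_le _ (cvg_exp _)).
by apply: nondecreasing_series => k _ _; rewrite exp_coeff_ge0 // divr_ge0 // sqr_ge0.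
Unshelve. all: by end_near.
Qed.

End CoshBound.

Section PowR.
Variable R : realType.

Lemma powR_prod (I : Type) (r : seq I) (P : pred I) (F : I -> R) a :
  (forall i, P i -> 0 <= F i) ->
  (\prod_(i <- r | P i) F i) `^ a = \prod_(i <- r | P i) F i `^ a.
Proof.
move=> F_ge0; elim: r => [|i r IH]; first by rewrite !big_nil powR1.
rewrite !big_cons; case: ifP => // Pi.
by rewrite powRM ?IH ?F_ge0 // prodr_ge0.
Qed.

Lemma powR_exprn (x a : R) k : 0 <= x -> (x ^+ k) `^ a = (x `^ a) ^+ k.
Proof. by move=> x_ge0; rewrite -powR_mulrn // -powRrM mulrC powRrM powR_mulrn ?powR_ge0. Qed.

Lemma sum_holder_event (T : finType) (w r : T -> R) (A : pred T) (p q M B : R) :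
  0 < p -> 0 < q -> p^-1 + q^-1 = 1 ->
  (forall x, 0 <= w x) -> (forall x, 0 <= r x) ->
  0 < M -> \sum_x w x * r x `^ p <= M ->
  0 < B -> \sum_(x | A x) w x <= B ->
  \sum_(x | A x) w x * r x <= M `^ p^-1 * B `^ q^-1.
Proof.
move=> p_gt0 q_gt0 pq w_ge0 r_ge0 M_gt0 hM B_gt0 hB.
set a := M `^ (- p^-1); set b := B `^ (- q^-1).
have a_gt0 : 0 < a by rewrite powR_gt0.
have b_gt0 : 0 < b by rewrite powR_gt0.
(* Young's inequality for r normalised by M^(1/p) and the indicator of A by B^(1/q). *)
have young x : r x * a * b <= r x `^ p / M / p + B^-1 / q.
  have := conjugate_powR (mulr_ge0 (r_ge0 x) (ltW a_gt0)) (ltW b_gt0) p_gt0 q_gt0 pq.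
  rewrite powRM ?(ltW a_gt0) // -!powRrM !mulNr !mulVf ?gt_eqF //.
  by rewrite !powR_inv1 ?(ltW M_gt0) ?(ltW B_gt0).
have -> : M `^ p^-1 * B `^ q^-1 = (a * b)^-1 by rewrite invfM /a /b !powRN !invrK.
rewrite -[leRHS]mul1r ler_pdivlMr ?mulr_gt0 // mulr_suml.
apply: le_trans (_ : \sum_(x | A x) w x * (r x `^ p / M / p + B^-1 / q) <= _).
  by apply: ler_sum => x _; rewrite -!mulrA; apply: ler_wpM2l => //; rewrite !mulrA young.
rewrite -pq; under eq_bigr do rewrite mulrDr !mulrA.
rewrite big_split /= -!mulr_suml; apply: lerD.
  rewrite -[leRHS]mul1r ler_pM2r ?invr_gt0 // ler_pdivrMr // mul1r (le_trans _ hM) //.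
  by rewrite [leRHS](bigID A) /= lerDl sumr_ge0 // => x _; rewrite mulr_ge0 ?powR_ge0.
by rewrite -[leRHS]mul1r ler_pM2r ?invr_gt0 // ler_pdivrMr // mul1r.
Qed.

End PowR.

Section FfunCons.
Variable T : finType.

Definition fcons n (b : T) (y : {ffun 'I_n -> T}) : {ffun 'I_n.+1 -> T} :=
  [ffun i => if unlift ord0 i is Some j then y j else b].

Lemma fcons0 n b (y : {ffun 'I_n -> T}) : fcons b y ord0 = b.
Proof. by rewrite ffunE unlift_none. Qed.

Lemma fconsS n b (y : {ffun 'I_n -> T}) j : fcons b y (lift ord0 j) = y j.
Proof. by rewrite ffunE liftK. Qed.

Lemma fcons_inj n : injective (fun p : T * {ffun 'I_n -> T} => fcons p.1 p.2).
Proof.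
move=> [b y] [c z] /= /ffunP eq_bycz; congr pair.
  by have := eq_bycz ord0; rewrite !fcons0.
by apply/ffunP => j; have := eq_bycz (lift ord0 j); rewrite !fconsS.
Qed.

Lemma fcons_eta n (x : {ffun 'I_n.+1 -> T}) :
  fcons (x ord0) [ffun j => x (lift ord0 j)] = x.
Proof. by apply/ffunP => i; rewrite ffunE; case: unliftP => [j ->|->] //; rewrite ffunE. Qed.

Lemma sum_ffunS (V : nmodType) n (F : {ffun 'I_n.+1 -> T} -> V) :
  \sum_x F x = \sum_b \sum_y F (fcons b y).
Proof.
rewrite pair_big /= (reindex (fun p : T * {ffun 'I_n -> T} => fcons p.1 p.2)) //.
exists (fun x : {ffun 'I_n.+1 -> T} => (x ord0, [ffun j => x (lift ord0 j)])).
  by move=> [b y] _; apply: fcons_inj; rewrite /= fcons_eta.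
by move=> x _; exact: fcons_eta.
Qed.

Lemma sum_ffun_ord0 (V : nmodType) (F : {ffun 'I_0 -> T} -> V) x0 : \sum_x F x = F x0.
Proof. by rewrite (big_pred1 x0) // => x; apply/esym/eqP/ffunP => -[]. Qed.

End FfunCons.

Lemma upd_fcons0 n b c (y : {ffun 'I_n -> bool}) : upd (fcons b y) ord0 c = fcons c y.
Proof. by apply/ffunP => k; rewrite !ffunE; case: unliftP => [j ->|->]. Qed.

Lemma upd_fconsS n b c (y : {ffun 'I_n -> bool}) i :
  upd (fcons b y) (lift ord0 i) c = fcons b (upd y i c).
Proof.
apply/ffunP => k; rewrite !ffunE; case: unliftP => [j ->|->].
  by rewrite (inj_eq (@lift_inj _ ord0)) ffunE.
by rewrite (negbTE (neq_lift _ _)).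
Qed.

Section ChainWeight.
Variables (R : comPzSemiRingType) (T : finType) (h : T -> T -> R) (rho : R).
Hypothesis h_row : forall a, \sum_b h a b = rho.

Definition chain_weight m (x : {ffun 'I_m.+1 -> T}) : R :=
  \prod_(i < m) h (x (widen_ord (leqnSn m) i)) (x (lift ord0 i)).

Lemma chain_weight_fcons m b (y : {ffun 'I_m.+1 -> T}) :
  chain_weight (fcons b y) = h b (y ord0) * chain_weight y.
Proof.
rewrite /chain_weight big_ord_recl; congr (_ * _).
  by rewrite (_ : widen_ord _ ord0 = ord0) ?fcons0 ?fconsS //; apply: val_inj.
apply: eq_bigr => i _.
rewrite (_ : widen_ord _ (lift ord0 i) = lift ord0 (widen_ord (leqnSn m) i)) ?fconsS //.
exact: val_inj.
Qed.

Lemma sum_chain_weight_from a m :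
  \sum_(y : {ffun 'I_m.+1 -> T}) h a (y ord0) * chain_weight y = rho ^+ m.+1.
Proof.
elim: m a => [|m IH] a.
  rewrite sum_ffunS -(h_row a) expr1; apply: eq_bigr => b _.
  by rewrite (sum_ffun_ord0 _ (ffun0 (card_ord 0))) fcons0 /chain_weight big_ord0 mulr1.
rewrite sum_ffunS exprS -{1}(h_row a) mulr_suml; apply: eq_bigr => b _.
under eq_bigr do rewrite chain_weight_fcons fcons0.
by rewrite -mulr_sumr -(IH b).
Qed.

Lemma sum_chain_weight m :
  \sum_(x : {ffun 'I_m.+1 -> T}) chain_weight x = #|T|%:R * rho ^+ m.
Proof.
case: m => [|m].
  rewrite /chain_weight; under eq_bigr do rewrite big_ord0.
  by rewrite sumr_const card_ffun card_ord expn1 expr0 mulr1.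
rewrite sum_ffunS (eq_bigr (fun=> rho ^+ m.+1)) ?sumr_const ?mulr_natl // => b _.
by under eq_bigr do rewrite chain_weight_fcons; exact: sum_chain_weight_from.
Qed.

End ChainWeight.

Section Expectation.
Variables (R : realType) (n : nat) (mu : {ffun 'I_n -> bool} -> R).
Hypothesis mu_ge0 : forall x, 0 <= mu x.

Lemma expectZ a g : expect mu (fun x => a * g x) = a * expect mu g.
Proof. by rewrite /expect mulr_sumr; apply: eq_bigr => x _; rewrite mulrCA. Qed.

Lemma expectD g h : expect mu (fun x => g x + h x) = expect mu g + expect mu h.
Proof. by rewrite /expect -big_split; apply: eq_bigr => x _; rewrite mulrDr. Qed.

Lemma expectN g : expect mu (fun x => - g x) = - expect mu g.
Proof. by rewrite /expect -sumrN; apply: eq_bigr => x _; rewrite mulrN. Qed.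

Lemma prob_le_expect (A : pred {ffun 'I_n -> bool}) h :
  (forall x, 0 <= h x) -> (forall x, A x -> 1 <= h x) -> prob mu A <= expect mu h.
Proof.
move=> h0 hA; rewrite /prob /expect [X in _ <= X](bigID A) /=.
rewrite -[X in X <= _]addr0 lerD ?sumr_ge0 // => [|x _]; last by rewrite mulr_ge0.
by apply: ler_sum => x Ax; rewrite -[X in X <= _]mulr1 ler_wpM2l ?hA.
Qed.

End Expectation.

Section ProductLaw.
Variable R : realType.
Local Notation uniform := (@prod_law R _).

Lemma prod_lawE n (x : {ffun 'I_n -> bool}) : uniform x = 2 ^- n.
Proof. by rewrite /prod_law /pi0 prodr_const card_ord div1r exprVn. Qed.

Lemma prod_law_ge0 n (x : {ffun 'I_n -> bool}) : 0 <= uniform x.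
Proof. by rewrite prod_lawE invr_ge0 exprn_ge0. Qed.

Lemma expect_prod_law_cst n (a : R) : expect (@prod_law R n) (fun=> a) = a.
Proof.
rewrite /expect -mulr_suml; under eq_bigr do rewrite prod_lawE.
rewrite sumr_const card_ffun card_bool card_ord -(mulr_natr (2 ^- n)) natrX.
by rewrite mulVf ?mul1r // expf_neq0.
Qed.

Lemma expect_prod_law_norm_le n (g : {ffun 'I_n -> bool} -> R) c :
  (forall x, `|g x| <= c) -> `|expect uniform g| <= c.
Proof.
move=> gc; rewrite -[c](expect_prod_law_cst n) /expect.
apply: le_trans (ler_norm_sum _ _ _) _; apply: ler_sum => x _.
by rewrite normrM ger0_norm ?prod_law_ge0 // ler_wpM2l ?prod_law_ge0.
Qed.

Lemma expect_prod_lawS n (g : {ffun 'I_n.+1 -> bool} -> R) :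
  expect uniform g = (expect uniform (fun y => g (fcons true y))
                      + expect uniform (fun y => g (fcons false y))) / 2.
Proof.
rewrite /expect sum_ffunS big_bool /= mulrDl !mulr_suml.
by congr (_ + _); apply: eq_bigr => y _; rewrite !prod_lawE exprSr invfM; ring.
Qed.

Lemma mgf_prod_law_le n (g : {ffun 'I_n -> bool} -> R) c s :
  (forall x i b, `|g x - g (upd x i b)| <= c) ->
  expect uniform (fun x => expR (s * (g x - expect uniform g)))
    <= expR (n%:R * (s ^+ 2 * c ^+ 2 / 8)).
Proof.
set K := s ^+ 2 * c ^+ 2 / 8.
elim: n g => [|n IH] g hg.
  rewrite /expect !(sum_ffun_ord0 _ (ffun0 (card_ord 0))) prod_lawE expr0 invr1.
  by rewrite !mul1r subrr mulr0 mul0r.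
set E := expect uniform g.
pose m b := expect uniform (fun y => g (fcons b y)).
pose d := s * (m true - m false) / 2.
have slice b : expect uniform (fun y => expR (s * (g (fcons b y) - E)))
    <= expR (s * (m b - E)) * expR (n%:R * K).
  have -> : (fun y => expR (s * (g (fcons b y) - E))) =
      (fun y => expR (s * (m b - E)) * expR (s * (g (fcons b y) - m b))).
    by apply/funext => y; rewrite -expRD; congr expR; ring.
  rewrite expectZ ler_wpM2l ?expR_ge0 //; apply: IH => x i c'.
  by rewrite -upd_fconsS hg.
have gap : `|m true - m false| <= c.
  rewrite /m -expectN -expectD; apply: expect_prod_law_norm_le => y.
  by rewrite -(upd_fcons0 true false) hg.
have mean : E = (m true + m false) / 2 by exact: expect_prod_lawS.
have dT : s * (m true - E) = d by rewrite mean /d; field.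
have dF : s * (m false - E) = - d by rewrite mean /d; field.
rewrite expect_prod_lawS -/E; move: (slice true) (slice false); rewrite dT dF => sT sF.
apply: le_trans (_ : (expR d + expR (- d)) / 2 * expR (n%:R * K) <= _).
  by rewrite [leRHS]mulrAC ler_pM2r ?invr_gt0 // mulrDl lerD.
rewrite -(nat1r n) [in leRHS]mulrDl mul1r expRD ler_pM2r ?expR_gt0 // ler_pdivrMr // mulrC.
apply: le_trans (expR_add_expRN_le d) _; rewrite ler_pM2l // ler_expR.
have -> : d ^+ 2 / 2 = s ^+ 2 * (m true - m false) ^+ 2 / 8 by rewrite /d; field.
rewrite /K ler_pM2r // ler_wpM2l ?sqr_ge0 //.
by move: gap; rewrite ler_norml => /andP[? ?]; nra.
Qed.

Lemma mcdiarmid_prod_law n (g : {ffun 'I_n -> bool} -> R) c t :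
  (0 < n)%N -> 0 < c -> 0 <= t ->
  (forall x i b, `|g x - g (upd x i b)| <= c) ->
  prob uniform (fun x => t <= `|g x - expect uniform g|)
    <= 2 * expR (- (2 * t ^+ 2) / (n%:R * c ^+ 2)).
Proof.
move=> n_gt0 c_gt0 t_ge0 hg.
have hNg x i b : `|- g x - - g (upd x i b)| <= c by rewrite -opprD normrN hg.
set E := expect uniform g.
(* [s] minimises the Chernoff exponent - s t + n s^2 c^2 / 8. *)
pose s := 4 * t / (n%:R * c ^+ 2).
have s_ge0 : 0 <= s.
  by apply: divr_ge0; [exact: mulr_ge0 | exact: mulr_ge0 (ler0n _ _) (sqr_ge0 c)].
pose h x := expR (- (s * t)) *
  (expR (s * (g x - E)) + expR (s * (- g x - expect uniform (fun y => - g y)))).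
apply: le_trans (prob_le_expect (@prod_law_ge0 n) (h := h) _ _) _.
- by move=> x; rewrite mulr_ge0 ?addr_ge0 ?expR_ge0.
- move=> x; rewrite /h expectN -/E mulrDr -!expRD ler_normr => /orP[] tle.
    apply: ler_wpDr; first exact: expR_ge0.
    by apply: le_trans (expR_ge1Dx _); rewrite lerDl; nra.
  apply: ler_wpDl; first exact: expR_ge0.
  by apply: le_trans (expR_ge1Dx _); rewrite lerDl; nra.
rewrite /h expectZ expectD.
apply: le_trans (ler_wpM2l (expR_ge0 _)
  (lerD (mgf_prod_law_le s hg) (mgf_prod_law_le s hNg))) _.
rewrite -mulr2n -(mulr_natl (expR _)) mulrCA -expRD ler_pM2l // ler_expR.
rewrite le_eqVlt; apply/predU1l; rewrite /s; field.
by rewrite gt_eqF // pnatr_eq0 -lt0n n_gt0.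
Qed.

End ProductLaw.

Section MarkovDensity.
Variable R : realType.
Local Notation uniform := (@prod_law R _).

Definition markov_density n (lam : R) (x : {ffun 'I_n -> bool}) : R :=
  2 ^+ n * markov_law lam x.

Lemma markov_lawE n (lam : R) (x : {ffun 'I_n -> bool}) :
  markov_law lam x = uniform x * markov_density lam x.
Proof. by rewrite prod_lawE /markov_density mulrA mulVf ?mul1r // expf_neq0. Qed.

Lemma Kmat_ge0 (lam : R) a b : 0 <= lam <= 1 -> 0 <= Kmat lam a b.
Proof. by case/andP=> lam_ge0 lam_le1; rewrite /Kmat; case: (a == b); rewrite ?subr_ge0. Qed.

Lemma markov_density_ge0 n (lam : R) (x : {ffun 'I_n -> bool}) :
  0 <= lam <= 1 -> 0 <= markov_density lam x.
Proof.
move=> lam01; rewrite /markov_density mulr_ge0 ?exprn_ge0 //.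
case: n x => [//|m] x /=; rewrite mulr_ge0 ?prodr_ge0 // ?/pi0 ?divr_ge0 //.
by move=> i _; exact: Kmat_ge0.
Qed.

Lemma markov_density_chain m (lam : R) (x : {ffun 'I_m.+1 -> bool}) :
  markov_density lam x = 2 ^+ m * chain_weight (Kmat lam) x.
Proof. by rewrite /markov_density /chain_weight /= /pi0 exprS; field. Qed.

Lemma expect_markov_density_powR n (lam alpha : R) : (0 < n)%N -> 0 <= lam <= 1 ->
  expect uniform (fun x : {ffun 'I_n -> bool} => markov_density lam x `^ alpha)
    = (2 `^ (alpha - 1) * ((1 - lam) `^ alpha + lam `^ alpha)) ^+ n.-1.
Proof.
case: n => [//|m] _ lam01 /=.
pose h a b := Kmat lam a b `^ alpha.
have h_row a : \sum_b h a b = (1 - lam) `^ alpha + lam `^ alpha.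
  by rewrite big_bool /h /Kmat; case: a => //=; rewrite addrC.
have densE (x : {ffun 'I_m.+1 -> bool}) :
    markov_density lam x `^ alpha = (2 `^ alpha) ^+ m * chain_weight h x.
  rewrite markov_density_chain powRM ?exprn_ge0 ?prodr_ge0 // => [|i _]; last exact: Kmat_ge0.
  by rewrite powR_exprn // /chain_weight powR_prod // => i _; exact: Kmat_ge0.
rewrite /expect; under eq_bigr do rewrite densE prod_lawE mulrCA.
rewrite -mulr_sumr -mulr_sumr (sum_chain_weight h_row) card_bool.
have two_neq0 : (2 : R) != 0 by rewrite pnatr_eq0.
rewrite powRB ?two_neq0 ?implybT // powRr1 // !exprMn exprVn exprS.
by field; rewrite expf_neq0.
Qed.

End MarkovDensity.

Lemma holder_bound_exponent (R : realType) (alpha S u : R) k :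
  1 < alpha -> 0 < S ->
  ((2 `^ (alpha - 1) * S) ^+ k) `^ alpha^-1 * (2 * expR u) `^ (alpha / (alpha - 1))^-1
  = 2 `^ (1 / (alpha / (alpha - 1))) *
    expR (u / (alpha / (alpha - 1))
          + k%:R / (alpha / (alpha - 1)) * ln (2 * S `^ (1 / (alpha - 1)))).
Proof.
move=> alpha_gt1 S_gt0; set beta := alpha / (alpha - 1).
have a1_neq0 : alpha - 1 != 0 by rewrite subr_eq0 gt_eqF.
have a_neq0 : alpha != 0 by rewrite gt_eqF // (lt_trans ltr01).
set Y := 2 * S `^ (1 / (alpha - 1)).
have Y_gt0 : 0 < Y by rewrite mulr_gt0 ?powR_gt0.
have YE : Y `^ (1 / beta) = (2 `^ (alpha - 1) * S) `^ alpha^-1.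
  rewrite !powRM ?powR_ge0 ?(ltW S_gt0) // -!powRrM.
  by congr (2 `^ _ * S `^ _); rewrite /beta; field; rewrite ?a1_neq0 ?a_neq0.
rewrite powR_exprn ?mulr_ge0 ?powR_ge0 ?(ltW S_gt0) // -YE.
rewrite (_ : k%:R / beta * ln Y = k%:R * (ln Y * (1 / beta))); last by ring.
by rewrite expRD expRM_natl !expRM lnK ?posrE // powRM ?expR_ge0 // !div1r; ring.
Qed.

Theorem corollary2 (R : realType) (n : nat) (hn : (1 < n)%N) (lam : R)
  (hlam0 : 0 < lam) (hlam1 : lam < 1)
  (f : {ffun 'I_n -> bool} -> R)
  (hf : forall (x : {ffun 'I_n -> bool}) (i : 'I_n) (b : bool),
      `|f x - f (upd x i b)| <= 1 / n%:R)
  (alpha : R) (halpha : 1 < alpha) (t : R) (ht : 0 < t) :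
  let beta := alpha / (alpha - 1) in
  prob (@markov_law R n lam)
    (fun x => t <= `|f x - expect (@prod_law R n) f|)
  <= 2 `^ (1 / beta) *
     expR (- (2 * n%:R * t ^+ 2) / beta
           + (n%:R - 1) / beta *
             ln (2 * ((1 - lam) `^ alpha + lam `^ alpha) `^ (1 / (alpha - 1)))).
Proof.
cbv zeta; set beta := alpha / (alpha - 1).
have n_gt0 : (0 < n)%N := ltnW hn.
have alpha_gt0 : 0 < alpha := lt_trans ltr01 halpha.
have beta_gt0 : 0 < beta by rewrite divr_gt0 // subr_gt0.
have conj : alpha^-1 + beta^-1 = 1 by rewrite /beta invf_div; field; rewrite gt_eqF.
have lam01 : 0 <= lam <= 1 by rewrite !ltW.
set S := (1 - lam) `^ alpha + lam `^ alpha.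
have S_gt0 : 0 < S by rewrite addr_gt0 ?powR_gt0 ?subr_gt0.
have inv_n_gt0 : 0 < 1 / n%:R :> R by rewrite divr_gt0 // ltr0n.
have := mcdiarmid_prod_law n_gt0 inv_n_gt0 (ltW ht) hf.
have -> : - (2 * t ^+ 2) / (n%:R * (1 / n%:R) ^+ 2) = - (2 * n%:R * t ^+ 2) :> R.
  by field; rewrite pnatr_eq0 -lt0n.
move=> tail.
have moment : expect (@prod_law R n) (fun x => markov_density lam x `^ alpha)
    <= (2 `^ (alpha - 1) * S) ^+ n.-1 by rewrite expect_markov_density_powR.
rewrite /prob; under eq_bigr do rewrite markov_lawE.
apply: le_trans (sum_holder_event alpha_gt0 beta_gt0 conj (@prod_law_ge0 R n)
  (fun x => markov_density_ge0 x lam01) _ moment _ tail) _.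
- by rewrite exprn_gt0 // mulr_gt0 ?powR_gt0.
- by rewrite mulr_gt0 ?expR_gt0.
by rewrite holder_bound_exponent // -subn1 natrB.
Qed.
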